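(* Let $X$ be an $X$-set parameter and let $G$ and $G'$ be graphs with no isolated vertices. Suppose $\varphi:\mathscr{X}^{\rm TAR}(G)\to\mathscr{X}^{\rm TAR}(G')$ is a graph isomorphism such that $|\varphi(S)|=|S|$ for every $X$-set $S$ of $G$. Then $\varphi$ maps minimal $X$-sets of $G$ to minimal $X$-sets of $G'$ of the same size.
   Context: All graphs are simple, finite, with nonempty vertex set. An $X$-set parameter is a graph parameter $X(G)$ defined as the minimum cardinality of an $X$-set of $G$, where the $X$-sets of each graph are subsets of its vertex set determined by some property satisfying: (1) supersets (within $V(G)$) of $X$-sets are $X$-sets; (2) the empty set is never an $X$-set; (3) an $X$-set of a disconnected graph is the union of an $X$-set of each component; (4) if $G$ has no isolated vertices, every set of $|V(G)|-1$ vertices is an $X$-set. The $X$-TAR graph $\mathscr{X}^{\rm TAR}(G)$ has as vertices all $X$-sets of $G$, with $S_1,S_2$ adjacent iff $|S_1\ominus S_2|=1$ (symmetric difference). A minimal $X$-set is one containing no proper subset that is an $X$-set. *)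

From mathcomp Require Import all_boot.
Set Implicit Arguments. Unset Strict Implicit. Unset Printing Implicit Defensive.

Record sgraph := SGraph {
  vtx : finType;
  adj : rel vtx;
  adj_sym : symmetric adj;
  adj_irr : irreflexive adj }.

Arguments adj : clear implicits.
Definition induced (G : sgraph) (C : {set vtx G}) : sgraph :=
  @SGraph {x : vtx G | x \in C} (fun u v => adj G (val u) (val v))
    (fun u v => @adj_sym G (val u) (val v)) (fun u => @adj_irr G (val u)).

Arguments induced : clear implicits.
Definition component (G : sgraph) (x : vtx G) : {set vtx G} :=
  [set y | connect (adj G) x y].

Definition connectedb (G : sgraph) : bool :=
  [forall x, forall y, connect (adj G) x y].

Definition no_isolated (G : sgraph) : bool :=
  [forall x : vtx G, [exists y, adj G x y]].

Definition restrict (G : sgraph) (C : {set vtx G}) (S : {set vtx G})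
  : {set vtx (induced G C)} := [set u : vtx (induced G C) | val u \in S].

Definition Xfamily := forall G : sgraph, pred {set vtx G}.

Definition Xparam (X : Xfamily) : Prop :=
  (forall G : sgraph, 0 < #|vtx G| ->
     forall S T : {set vtx G}, S \subset T -> X G S -> X G T) /\
  (forall G : sgraph, 0 < #|vtx G| -> ~~ X G set0) /\
  (* (3) in a disconnected graph, X-sets are exactly unions of X-sets of the components *)
  (forall G : sgraph, 0 < #|vtx G| -> ~~ connectedb G ->
     forall S : {set vtx G},
       X G S = [forall x, X (induced G (component x)) (@restrict G (component x) S)]) /\
  (forall G : sgraph, 0 < #|vtx G| -> no_isolated G ->
     forall S : {set vtx G}, #|S| = #|vtx G| - 1 -> X G S).

Definition TARv (X : Xfamily) (G : sgraph) := {S : {set vtx G} | X G S}.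

Definition TARadj (X : Xfamily) (G : sgraph) (S T : TARv X G) : bool :=
  #|(val S :\: val T) :|: (val T :\: val S)| == 1.

Definition minimalX (X : Xfamily) (G : sgraph) (S : {set vtx G}) : bool :=
  X G S && [forall T : {set vtx G}, (T \proper S) ==> ~~ X G T].

(* Since X-sets are closed under supersets, an X-set S is minimal iff no S :\ v
   with v in S is an X-set, i.e. iff no X-TAR neighbour of S is smaller than S.
   An isomorphism of X-TAR graphs that preserves sizes preserves this
   property. *)

From mathcomp Require Import all_boot zify.

Lemma proper_of_symdiff1 {T : finType} {A B : {set T}} :
  #|(A :\: B) :|: (B :\: A)| = 1 -> #|B| < #|A| -> B \proper A.
Proof.
move=> card1 ltBA.
have disjD : [disjoint A :\: B & B :\: A].
  by rewrite -setI_eq0; apply/eqP/setP => x; rewrite !inE; case: (x \in A); case: (x \in B).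
have [_] := leq_card_setU (A :\: B) (B :\: A); rewrite disjD => /eqP cardU.
have := cardsID B A; have := cardsID A B; rewrite setIC => cardA cardB.
have /eqP : #|B :\: A| = 0 by lia.
by rewrite cards_eq0 setD_eq0 properEcard => ->.
Qed.

Definition no_smaller_neighbour {X : Xfamily} {G : sgraph} (S : TARv X G) : bool :=
  [forall T, TARadj S T ==> (#|val S| <= #|val T|)].

Section MinimalInTAR.

Context {X : Xfamily} {G : sgraph}.
Hypothesis X_upclosed : forall S T : {set vtx G}, S \subset T -> X G S -> X G T.

Lemma minimalX_no_smaller_neighbour (S : TARv X G) :
  minimalX X (val S) = no_smaller_neighbour S.
Proof.
rewrite /minimalX (valP S) /=; apply/forallP/forallP => [minS T | noSmaller T].
  apply/implyP => /eqP adjST; rewrite leqNgt; apply/negP => ltTS.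
  by have := minS (val T); rewrite (proper_of_symdiff1 adjST ltTS) (valP T).
apply/implyP => /properP[subTS [v vS vT]]; apply/negP => XT.
have XSv : X G (val S :\ v).
  apply: X_upclosed XT; apply/subsetP => y yT.
  by rewrite !inE (subsetP subTS) // andbT; apply: contraNneq vT => <-.
have /implyP := noSmaller (exist (X G) _ XSv); rewrite /TARadj /= leqNgt.
suff -> : (val S :\: (val S :\ v)) :|: ((val S :\ v) :\: val S) = [set v].
  by rewrite cards1 (cardsD1 v (val S)) vS ltnSn => /(_ isT).
apply/setP => y; rewrite !inE; case: (y =P v) => [->|_]; rewrite ?vS //=.
by case: (y \in val S).
Qed.

End MinimalInTAR.

Lemma no_smaller_neighbour_iso {X : Xfamily} {G G' : sgraph}
    (phi : TARv X G -> TARv X G') :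
  bijective phi ->
  (forall S T, TARadj (phi S) (phi T) = TARadj S T) ->
  (forall S, #|val (phi S)| = #|val S|) ->
  forall S, no_smaller_neighbour S -> no_smaller_neighbour (phi S).
Proof.
move=> [psi _ psiK] phi_adj phi_card S /forallP noSmaller.
apply/forallP => T'; rewrite -(psiK T') phi_adj !phi_card.
exact: noSmaller.
Qed.

Theorem proposition2p14 (X : Xfamily) (HX : Xparam X)
  (G G' : sgraph) (hG : 0 < #|vtx G|) (hG' : 0 < #|vtx G'|)
  (nG : no_isolated G) (nG' : no_isolated G')
  (phi : TARv X G -> TARv X G')
  (phi_bij : bijective phi)
  (phi_adj : forall S T : TARv X G, TARadj (phi S) (phi T) = TARadj S T)
  (phi_card : forall S : TARv X G, #|val (phi S)| = #|val S|) :
  forall S : TARv X G, minimalX X (val S) ->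
    minimalX X (val (phi S)) /\ #|val (phi S)| = #|val S|.
Proof.
case: HX => X_upclosed _ S minS; split; last exact: phi_card.
rewrite (minimalX_no_smaller_neighbour (X_upclosed G' hG')).
apply: no_smaller_neighbour_iso => //.
by rewrite -(minimalX_no_smaller_neighbour (X_upclosed G hG)).
Qed.
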